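(* Let $T:\mathcal{H}\to Y$ be a linear operator from a (real or complex) Hilbert space $\mathcal{H}$ to a Banach space $Y$. The following are equivalent: (i) $T$ is compact; (ii) $T$ maps every orthonormal subset of $\mathcal{H}$ into a relatively compact set; (iii) $T$ maps every orthonormal sequence of $\mathcal{H}$ to a norm-null sequence; (iv) for every orthonormal basis $A$ of $\mathcal{H}$ and every $\varepsilon>0$, the set $A_\varepsilon=\{a\in A:\|Ta\|\ge\varepsilon\}$ is finite; (v) $T$ maps every orthonormal basis of $\mathcal{H}$ into a relatively compact set.
   Context: A linear operator $T:\mathcal{H}\to Y$ is compact if $T(B_{\mathcal{H}})$ is relatively compact in $Y$, where $B_{\mathcal{H}}$ is the closed unit ball of $\mathcal{H}$. *)

From HB Require Import structures.
From mathcomp Require Import all_boot all_order all_algebra.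
From mathcomp Require Import all_classical all_reals all_analysis.
From mathcomp Require Import complex.
Set Implicit Arguments. Unset Strict Implicit. Unset Printing Implicit Defensive.
Import Order.TTheory GRing.Theory Num.Theory.
Import numFieldNormedType.Exports.
Local Open Scope classical_set_scope.
Local Open Scope ring_scope.

(* Scalars K with a conjugation [conj] (identity for real spaces,
   complex conjugation for complex spaces). *)

Definition is_inner_product (K : numFieldType) (conj : K -> K)
    (H : normedModType K) (inner : H -> H -> K) : Prop :=
  [/\ (forall (a : K) (x y z : H), inner (a *: x + y) z = a * inner x z + inner y z),
      (forall x y : H, inner y x = conj (inner x y)) &
      (forall x : H, inner x x = `|x| ^+ 2)].

Definition orthonormal_set (K : numFieldType) (H : normedModType K)
    (inner : H -> H -> K) (A : set H) : Prop :=
  forall x y, A x -> A y -> inner x y = (if x == y then 1 else 0).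

Definition orthonormal_seq (K : numFieldType) (H : normedModType K)
    (inner : H -> H -> K) (u : nat -> H) : Prop :=
  forall i j : nat, inner (u i) (u j) = (if i == j then 1 else 0).

Definition orthonormal_basis (K : numFieldType) (H : normedModType K)
    (inner : H -> H -> K) (A : set H) : Prop :=
  orthonormal_set inner A /\
  (forall x, (forall a, A a -> inner x a = 0) -> x = 0).

Definition relatively_compact (X : topologicalType) (A : set X) : Prop :=
  compact (closure A).

Definition compact_operator (K : numFieldType) (H Y : normedModType K)
    (T : H -> Y) : Prop :=
  relatively_compact (T @` [set x : H | `|x| <= 1]).

Definition theorem6_stmt (K : numFieldType) (conj : K -> K) : Prop :=
  forall (H : completeNormedModType K) (inner : H -> H -> K)
         (Y : completeNormedModType K) (T : {linear H -> Y}),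
  is_inner_product conj inner ->
  [<-> compact_operator T;
       forall A : set H, orthonormal_set inner A -> relatively_compact (T @` A);
       forall u : nat -> H, orthonormal_seq inner u ->
         (fun n => `|T (u n)|) @ \oo --> (0 : K);
       forall A : set H, orthonormal_basis inner A ->
         forall eps : K, 0 < eps -> finite_set [set a | A a /\ eps <= `|T a|];
       forall A : set H, orthonormal_basis inner A -> relatively_compact (T @` A)].

From HB Require Import structures.
From mathcomp Require Import all_boot all_order all_algebra.
From mathcomp Require Import all_classical all_reals all_analysis.
From mathcomp Require Import complex.
Set Implicit Arguments. Unset Strict Implicit. Unset Printing Implicit Defensive.
Import Order.TTheory GRing.Theory Num.Theory.
Import numFieldNormedType.Exports.
Local Open Scope classical_set_scope.
Local Open Scope ring_scope.

(* The scalars are only assumed archimedean with a totally bounded unit ball,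
   which covers R and R[i]; completeness of Y turns total boundedness into
   relative compactness.
   (i) -> (ii) and (v) -> (ii) are monotonicity of relative compactness, since
   orthonormal vectors have norm 1 and every orthonormal set extends (Zorn) to
   a basis. (iii) -> (iv): infinitely many a in A with eps <= |T a| would form
   an orthonormal sequence whose image is not null. (iv) -> (v): a set with
   finitely many points of norm >= eps is eps-close to a finite set.
   (ii) -> (iii) cannot use weak convergence, as T is not assumed bounded.
   Instead, if eps <= |T u_n| infinitely often, total boundedness of T(range u)
   yields infinitely many T u_n within eps/2 of a single z with |z| > eps/2;
   averaging (r+1)^2 of them, in disjoint blocks, with weight 1/(r+1) gives
   orthonormal w_r with |T w_r| >= (r+1)(|z| - eps/2), an unbounded image of
   an orthonormal set.
   (iii) -> (i): a maximal orthonormal set of unit vectors x with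
   eps < |T x| is finite by (iii), and T is eps-small on its orthogonal
   complement, so the image of the unit ball is within eps of the totally
   bounded set of bounded combinations of the images of that finite set. *)

Section InnerProduct.
Variables (K : numFieldType) (conj : K -> K) (H : normedModType K)
  (inner : H -> H -> K).
Hypothesis inner_prod : is_inner_product conj inner.

Lemma innerDl x y z : inner (x + y) z = inner x z + inner y z.
Proof. by case: inner_prod => lin _ _; have := lin 1 x y z; rewrite scale1r mul1r. Qed.

Lemma inner0l z : inner 0 z = 0.
Proof. by apply: (@addrI _ (inner 0 z)); rewrite -innerDl !addr0. Qed.

Lemma innerZl a x z : inner (a *: x) z = a * inner x z.
Proof.
by case: inner_prod => lin _ _; have := lin a x 0 z; rewrite !addr0 inner0l addr0.
Qed.

Lemma innerBl x y z : inner (x - y) z = inner x z - inner y z.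
Proof. by rewrite innerDl -scaleN1r innerZl mulN1r. Qed.

Lemma inner_suml (I : Type) (r : seq I) (P : pred I) (F : I -> H) z :
  inner (\sum_(i <- r | P i) F i) z = \sum_(i <- r | P i) inner (F i) z.
Proof. exact: (big_morph (inner^~ z) (fun x y => innerDl x y z) (inner0l z)). Qed.

Lemma inner_self x : inner x x = `|x| ^+ 2.
Proof. by case: inner_prod. Qed.

Lemma conj_inner_self x : conj (inner x x) = inner x x.
Proof. by case: inner_prod => _ sym _; rewrite -sym. Qed.

(* [conj] is arbitrary, so [inner] need not be additive in its second
   argument; orthogonality is nonetheless symmetric. *)
Lemma inner_eq0_sym x y : inner x y = 0 -> inner y x = 0.
Proof.
case: inner_prod => _ sym _ xy0.
by rewrite sym xy0 -(inner0l 0) conj_inner_self.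
Qed.

Lemma pythagoras x y : inner x y = 0 -> `|x + y| ^+ 2 = `|x| ^+ 2 + `|y| ^+ 2.
Proof.
case: inner_prod => _ sym _ xy0; have yx0 := inner_eq0_sym xy0.
rewrite -inner_self innerDl (sym _ x) (sym _ y) !innerDl xy0 yx0 addr0 add0r.
by rewrite !conj_inner_self !inner_self.
Qed.

Lemma norm_le_add_orthogonal x y : inner x y = 0 -> `|x| <= `|x + y|.
Proof.
move=> xy0; rewrite -(ler_pXn2r (n := 2)) ?nnegrE // pythagoras //.
by rewrite lerDl exprn_ge0.
Qed.

Lemma norm_inner_le_unit x e : `|e| = 1 -> `|inner x e| <= `|x|.
Proof.
move=> e1; set c := inner x e.
have perp : inner (x - c *: e) e = 0.
  by rewrite innerBl innerZl inner_self e1 expr1n mulr1 subrr.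
have := @norm_le_add_orthogonal (c *: e) (x - c *: e).
by rewrite innerZl (inner_eq0_sym perp) mulr0 addrC subrK normrZ e1 mulr1; apply.
Qed.

Lemma norm_eq1_inner x : inner x x = 1 -> `|x| = 1.
Proof. by rewrite inner_self => /eqP; rewrite sqrp_eq1 // => /eqP. Qed.

Lemma orthonormal_norm (A : set H) a : orthonormal_set inner A -> A a -> `|a| = 1.
Proof. by move=> onA Aa; apply: norm_eq1_inner; rewrite onA // eqxx. Qed.

Lemma orthonormal_setU1 (A : set H) x : orthonormal_set inner A -> `|x| = 1 ->
  (forall a, A a -> inner x a = 0) -> orthonormal_set inner (A `|` [set x]).
Proof.
move=> onA x1 xA; have xx1 : inner x x = 1 by rewrite inner_self x1 expr1n.
have xNA : ~ A x by move=> /xA; rewrite xx1 => /eqP; rewrite oner_eq0.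
move=> a b [Aa|->] [Ab|->]; first exact: onA.
- by rewrite (inner_eq0_sym (xA a Aa)); case: eqP => // ax; rewrite -ax in xNA.
- by rewrite xA //; case: eqP => // xb; rewrite xb in xNA.
- by rewrite eqxx.
Qed.

Lemma orthonormal_seq_inj (A : set H) (u : nat -> H) :
  orthonormal_set inner A -> (forall n, A (u n)) -> injective u ->
  orthonormal_seq inner u.
Proof. by move=> onA Au u_inj i j; rewrite onA // (inj_eq u_inj). Qed.

Lemma orthonormal_seq_comp (u : nat -> H) (m : nat -> nat) :
  orthonormal_seq inner u -> injective m -> orthonormal_seq inner (u \o m).
Proof. by move=> onu m_inj i j; rewrite /= onu (inj_eq m_inj). Qed.

Lemma orthonormal_set_range (u : nat -> H) :
  orthonormal_seq inner u -> orthonormal_set inner (range u).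
Proof.
move=> onu _ _ [i _ <-] [j _ <-]; rewrite onu.
have [<-|ij] := eqVneq i j; first by rewrite eqxx.
case: eqP => // uij; have := onu j j; rewrite -{1}uij onu (negbTE ij) eqxx.
by move=> /esym/eqP; rewrite oner_eq0.
Qed.

Lemma maximal_orthonormal_set (Q A : set H) :
  A `<=` Q -> orthonormal_set inner A ->
  exists B, [/\ A `<=` B, B `<=` Q, orthonormal_set inner B &
    forall x, Q x -> `|x| = 1 -> (forall b, B b -> inner x b = 0) -> B x].
Proof.
move=> AQ onA.
pose P X := X `<=` Q /\ orthonormal_set inner (A `|` X).
have chainP (F : set (set H)) : F `<=` P -> total_on F subset ->
    P (\bigcup_(X in F) X).
  move=> FP Ftot; split=> [x [X /FP[XQ _] /XQ]//|].
  have inA_or_F x : (A `|` \bigcup_(X in F) X) x ->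
      A x \/ exists2 X, F X & X x.
    by case=> [|[X FX Xx]]; [left|right; exists X].
  move=> x y /inA_or_F[Ax|[X FX Xx]] /inA_or_F[Ay|[Y FY Yy]].
  - exact: onA.
  - by have [_ onY] := FP Y FY; apply: onY; [left|right].
  - by have [_ onX] := FP X FX; apply: onX; [right|left].
  - have [XY|YX] := Ftot X Y FX FY.
      by have [_ onY] := FP Y FY; apply: onY; right => //; apply: XY.
    by have [_ onX] := FP X FX; apply: onX; right => //; apply: YX.
have [X [[XQ onAX] Xmax]] := Zorn_bigcup chainP.
exists (A `|` X); split=> //; first by move=> x [/AQ|/XQ].
move=> x Qx x1 xB; apply: contrapT => xNB.
apply: (Xmax (X `|` [set x])); rewrite /P.
  split=> [|XxX]; first exact: subsetUl.
  by apply: xNB; right; apply: XxX; right.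
split=> [y [/XQ//|->//]|].
by rewrite setUA; apply: orthonormal_setU1.
Qed.

Lemma orthonormal_basis_ext (A : set H) : orthonormal_set inner A ->
  exists2 B, A `<=` B & orthonormal_basis inner B.
Proof.
move=> onA; have [B [AB _ onB Bmax]] := maximal_orthonormal_set (subsetT A) onA.
exists B => //; split=> // x xB; apply/eqP; apply: contraT => x0.
pose e := `|x|^-1 *: x.
have eB b : B b -> inner e b = 0 by move=> Bb; rewrite innerZl xB // mulr0.
have /eB : B e by apply: Bmax => //; exact: normfZV.
by rewrite inner_self normfZV // expr1n => /eqP; rewrite oner_eq0.
Qed.

Definition orth_proj (s : seq H) (x : H) := \sum_(b <- s) inner x b *: b.

Section OrthogonalProjection.
Variable s : seq H.
Hypotheses (s_uniq : uniq s) (s_on : orthonormal_set inner [set` s]).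

Lemma inner_sub_orth_proj x b : b \in s -> inner (x - orth_proj s x) b = 0.
Proof.
move=> sb; rewrite innerBl inner_suml (bigD1_seq b) //= big_seq_cond.
rewrite big1 => [|c /andP[sc cb]].
  by rewrite innerZl (s_on sb sb) eqxx mulr1 addr0 subrr.
by rewrite innerZl (s_on sc sb) (negbTE cb) mulr0.
Qed.

Lemma norm_sub_orth_proj_le x : `|x - orth_proj s x| <= `|x|.
Proof.
have := @norm_le_add_orthogonal (x - orth_proj s x) (orth_proj s x).
rewrite subrK; apply; apply: inner_eq0_sym.
rewrite inner_suml big_seq big1 // => b sb.
by rewrite innerZl (inner_eq0_sym (inner_sub_orth_proj x sb)) mulr0.
Qed.

End OrthogonalProjection.

Section OrthonormalSums.
Variable u : nat -> H.
Hypothesis u_on : orthonormal_seq inner u.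

Lemma inner_sum_orthonormal_l (s : seq nat) j : j \notin s ->
  inner (\sum_(i <- s) u i) (u j) = 0.
Proof.
move=> jNs; rewrite inner_suml big_seq big1 // => i si.
by rewrite u_on; case: eqP => // ij; rewrite -ij si in jNs.
Qed.

Lemma inner_sum_orthonormal (s t : seq nat) : {in s & t, forall i j, i != j} ->
  inner (\sum_(i <- s) u i) (\sum_(j <- t) u j) = 0.
Proof.
move=> st; rewrite inner_suml big_seq big1 // => i si.
apply/inner_eq0_sym/inner_sum_orthonormal_l.
by apply/negP => /(st i i si); rewrite eqxx.
Qed.

Lemma norm_sum_orthonormal (s : seq nat) : uniq s ->
  `|\sum_(i <- s) u i| ^+ 2 = (size s)%:R.
Proof.
elim: s => [|i s IHs] /=; first by rewrite big_nil normr0 expr0n.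
move=> /andP[iNs s_uniq]; rewrite big_cons pythagoras; last first.
  exact/inner_eq0_sym/inner_sum_orthonormal_l.
by rewrite IHs // -inner_self u_on eqxx -natr1 addrC.
Qed.

End OrthonormalSums.

End InnerProduct.

Lemma norm_sum_ge (K : numFieldType) (Y : normedModType K) (I : Type)
    (s : seq I) (x : I -> Y) (y : Y) (d : K) :
  (forall i, `|x i - y| <= d) -> (`|y| - d) *+ size s <= `|\sum_(i <- s) x i|.
Proof.
move=> xy; have dev : `|\sum_(i <- s) x i - y *+ size s| <= d *+ size s.
  elim: s => [|i s IHs]; first by rewrite big_nil subrr normr0.
  rewrite big_cons /= !mulrS opprD addrACA (le_trans (ler_normD _ _)) //.
  exact: lerD.
rewrite mulrnBl lerBlDr -normrMn (le_trans _ (lerD (lexx _) dev)) //.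
by rewrite -{1}[y *+ _](subrK (\sum_(i <- s) x i)) addrC distrC ler_normD.
Qed.

Definition totally_bounded (K : numFieldType) (V : normedModType K) (A : set V) :=
  forall e : K, 0 < e ->
  exists s : seq V, forall x, A x -> exists2 z, z \in s & `|x - z| < e.

Section TotallyBounded.
Variables (K : numFieldType) (Y : normedModType K).

Lemma totally_bounded_subset (A B : set Y) :
  A `<=` B -> totally_bounded B -> totally_bounded A.
Proof. by move=> AB tbB e e0; have [s sB] := tbB e e0; exists s => x /AB /sB. Qed.

Lemma compact_totally_bounded (A : set Y) : compact A -> totally_bounded A.
Proof.
rewrite compact_cover => cA e e0.
have [|D _ AD] := cA Y A (ball^~ e) (fun z _ => ball_open z e).
  by move=> x Ax; exists x => //; exact: ballxx.
exists (finmap.enum_fset D) => x /AD[z Dz].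
by rewrite -ball_normE /= distrC; exists z.
Qed.

Lemma precompact_totally_bounded (A : set Y) :
  precompact A -> totally_bounded A.
Proof.
rewrite precompactE => /compact_totally_bounded.
exact/totally_bounded_subset/subset_closure.
Qed.

Lemma totally_bounded_bounded (A : set Y) :
  totally_bounded A -> exists M, forall x, A x -> `|x| <= M.
Proof.
move=> /(_ 1 ltr01)[s sA]; exists (\sum_(z <- s) `|z| + 1) => x /sA[z sz xz].
rewrite -[x](subrK z) (le_trans (ler_normD _ _)) // addrC lerD //; last exact: ltW.
by rewrite (big_rem z) //= lerDl sumr_ge0.
Qed.

Lemma totally_bounded_approx (A : set Y) :
  (forall e : K, 0 < e -> exists2 B, totally_bounded B &
     forall x, A x -> exists2 y, B y & `|x - y| < e) -> totally_bounded A.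
Proof.
move=> approx e e0; have e2 : 0 < e / 2 by rewrite divr_gt0.
have [B tbB AB] := approx _ e2; have [s sB] := tbB _ e2.
exists s => x /AB[y /sB[z sz yz] xy]; exists z => //.
by rewrite (le_lt_trans (ler_distD y _ _)) // [e]splitr ltrD.
Qed.

Lemma totally_bounded_add (A B : set Y) : totally_bounded A -> totally_bounded B ->
  totally_bounded [set a + b | a in A & b in B].
Proof.
move=> tbA tbB e e0; have e2 : 0 < e / 2 by rewrite divr_gt0.
have [s sA] := tbA _ e2; have [t tB] := tbB _ e2.
exists [seq a + b | a <- s, b <- t] => _ [a Aa [b Bb <-]].
have [a' sa' aa'] := sA a Aa; have [b' tb' bb'] := tB b Bb.
exists (a' + b'); first exact: allpairs_f.
by rewrite opprD addrACA (le_lt_trans (ler_normD _ _)) // [e]splitr ltrD.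
Qed.

Hypothesis unit_ball_tb : totally_bounded [set c : K | `|c| <= 1].

Lemma totally_bounded_scaled_ball (v : Y) :
  totally_bounded [set c *: v | c in [set c : K | `|c| <= 1]].
Proof.
move=> e e0; have v1 : 0 < `|v| + 1 by rewrite ltr_wpDl.
have [s sB] := unit_ball_tb (divr_gt0 e0 v1).
exists [seq c *: v | c <- s] => _ [c c1 <-]; have [c' sc' cc'] := sB c c1.
exists (c' *: v); first exact: map_f.
rewrite -scalerBl normrZ (le_lt_trans (ler_wpM2r _ (ltW cc'))) //.
by rewrite mulrAC ltr_pdivrMr // ltr_pM2l // ltrDl.
Qed.

Definition bounded_combinations (I : eqType) (s : seq I) (v : I -> Y) : set Y :=
  [set \sum_(i <- s) c i *: v i
  | c in [set c : I -> K | {in s, forall i, `|c i| <= 1}]].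

Lemma totally_bounded_combinations (I : eqType) (s : seq I) (v : I -> Y) :
  totally_bounded (bounded_combinations s v).
Proof.
elim: s => [|i s IHs].
  move=> e e0; exists [:: 0] => _ [c _ <-]; exists 0; rewrite ?mem_head //.
  by rewrite big_nil subrr normr0.
have := totally_bounded_add (totally_bounded_scaled_ball (v i)) IHs.
apply: totally_bounded_subset => _ [c c1 <-]; rewrite big_cons.
exists (c i *: v i); first by apply/imageP/c1; rewrite mem_head.
exists (\sum_(j <- s) c j *: v j) => //; apply: imageP => j sj.
by apply: c1; rewrite inE sj orbT.
Qed.

End TotallyBounded.

Lemma ultra_exists_in_seq (T : Type) (U : eqType) (F : set_system T) (s : seq U)
    (Q : U -> set T) : UltraFilter F ->
  F [set p | exists2 z, z \in s & Q z p] -> exists2 z, z \in s & F (Q z).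
Proof.
move=> FU; elim: s => [|z s IHs] Fs.
  by have /filter_not_empty : F set0 by apply: filterS Fs => p [z].
have [FQz|FNQz] := in_ultra_setVsetC (Q z) FU.
  by exists z; rewrite ?mem_head.
have [|y sy FQy] := IHs; last by exists y; rewrite // inE sy orbT.
apply: filterS (filterI Fs FNQz) => p [[y]]; rewrite inE.
by case/orP=> [/eqP-> //|sy Qyp _]; exists y.
Qed.

Lemma totally_bounded_precompact (K : numFieldType) (Y : completeNormedModType K)
    (A : set Y) : totally_bounded A -> precompact A.
Proof.
move=> tbA; rewrite precompactE compact_ultra => F FU Fcl.
have F_proper : ProperFilter F := @ultra_proper _ F FU.
have : cauchy F.
  apply: cauchy_exP => e e0; have e2 : 0 < e / 2 by rewrite divr_gt0.
  have [s sA] := tbA _ e2.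
  suff /(ultra_exists_in_seq FU)[z _ Fz] :
      F [set p | exists2 z, z \in s & ball z e p] by exists z.
  apply: filterS Fcl => p /(_ _ (nbhsx_ballx p _ e2))[x [Ax]].
  rewrite -ball_normE /= => px; have [z sz xz] := sA x Ax; exists z => //.
  by rewrite (le_lt_trans (ler_distD x _ _)) // [e]splitr ltrD // distrC.
move=> /cauchy_cvg F_lim; exists (lim F); split=> //.
exact: (@closed_cvg _ _ F F_proper id _ (@closed_closure _ A) Fcl _ F_lim).
Qed.

Lemma infinite_set_injection (T : pointedType) (A : set T) :
  infinite_set A -> exists2 f : nat -> T, injective f & forall n, A (f n).
Proof.
move=> /infiniteP/pcard_leP[f]; exists f => [i j|n]; last exact: funS.
by apply: inj; rewrite in_setT.
Qed.

Lemma near_infty_cofinite (P : nat -> Prop) :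
  finite_set [set n | ~ P n] -> \forall n \near \oo, P n.
Proof.
move=> /finite_seqP[s sP]; exists (\max_(i <- s) i).+1 => // n /= sn.
apply: contrapT => nPn; have : [set` s] n by rewrite -sP.
move=> /= ns; have := @leq_bigmax_seq _ s xpredT id n ns isT.
by rewrite leqNgt sn.
Qed.

Lemma totally_bounded_infinite_cluster (K : numFieldType) (Y : normedModType K)
    (I : Type) (x : I -> Y) (N : set I) (d : K) :
  0 < d -> totally_bounded (x @` N) -> infinite_set N ->
  exists z, infinite_set [set i | N i /\ `|x i - z| < d].
Proof.
move=> d0 tbN Ninf; have [s sN] := tbN d d0; apply: contrapT => fin_cl.
pose cluster z := [set i | N i /\ `|x i - z| < d].
apply/Ninf/(sub_finite_set _ (bigcup_finite (F := cluster) (finite_seq s) _)).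
  by move=> i Ni; have [z sz xz] := sN (x i) (imageP x Ni); exists z.
by move=> z _; apply: contrapT => zinf; apply: fin_cl; exists z.
Qed.

Lemma totally_bounded_finite_large (K : numFieldType) (Y : normedModType K)
    (S : set Y) :
  (forall e : K, 0 < e -> finite_set [set y | S y /\ e <= `|y|]) ->
  totally_bounded S.
Proof.
move=> fin e e0; have /finite_seqP[s s_large] := fin e e0.
exists (0 :: s) => y Sy; have [ey|] := boolP (e <= `|y|).
  have /= ys : [set` s] y by rewrite -s_large.
  by exists y; rewrite ?inE ?ys ?orbT // subrr normr0.
by exists 0; rewrite ?mem_head // subr0 real_ltNge ?normr_real ?gtr0_real.
Qed.

Definition block_start (r : nat) : nat := \sum_(k < r) k.+1 ^ 2.

Definition block (r : nat) : seq nat :=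
  index_iota (block_start r) (block_start r.+1).

Lemma size_block r : size (block r) = (r.+1 ^ 2)%N.
Proof. by rewrite size_iota /block_start big_ord_recr /= addKn. Qed.

Lemma block_uniq r : uniq (block r).
Proof. exact: iota_uniq. Qed.

Lemma block_disjoint r r' :
  r != r' -> {in block r & block r', forall i j, i != j}.
Proof.
have b_homo : {homo block_start : m n / (m <= n)%N}.
  apply: homo_leq => [//|y x z|n]; first exact: leq_trans.
  by rewrite /block_start big_ord_recr leq_addr.
wlog lt_rr' : r r' / (r < r')%N.
  move=> wlog_lt; rewrite neq_ltn => /orP[lt|lt].
    exact: wlog_lt lt (negbT (ltn_eqF lt)).
  move=> i j ri r'j; rewrite eq_sym.
  exact: (wlog_lt r' r lt (negbT (ltn_eqF lt)) j i r'j ri).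
move=> _ i j; rewrite !mem_index_iota => /andP[_ ir] /andP[r'j _].
by rewrite ltn_eqF // (leq_trans ir) // (leq_trans (b_homo _ _ lt_rr')).
Qed.

Section BlockAverages.
Variables (K : numFieldType) (conj : K -> K) (H : normedModType K)
  (inner : H -> H -> K).
Hypothesis inner_prod : is_inner_product conj inner.

(* The (r+1)^2 vectors of a block averaged with weight 1/(r+1) give a unit
   vector without square roots, which K need not have. *)
Definition block_average (v : nat -> H) (r : nat) : H :=
  r.+1%:R^-1 *: \sum_(i <- block r) v i.

Lemma orthonormal_block_average (v : nat -> H) :
  orthonormal_seq inner v -> orthonormal_seq inner (block_average v).
Proof.
move=> v_on r r'; have [<-|rr'] := eqVneq r r'.
  rewrite (inner_self inner_prod) normrZ exprMn.
  rewrite (norm_sum_orthonormal inner_prod v_on (block_uniq r)) size_block.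
  by rewrite ger0_norm ?invr_ge0 // natrX -exprMn mulVf ?expr1n.
rewrite (innerZl inner_prod) (inner_eq0_sym inner_prod) ?mulr0 //.
rewrite (innerZl inner_prod) (inner_sum_orthonormal inner_prod v_on) ?mulr0 //.
by apply: block_disjoint; rewrite eq_sym.
Qed.

End BlockAverages.

Section OrthonormalImages.
Variables (K : numFieldType) (conj : K -> K) (H : normedModType K)
  (inner : H -> H -> K) (Y : normedModType K) (T : {linear H -> Y}).
Hypothesis inner_prod : is_inner_product conj inner.

Lemma compact_operator_orthonormal (A : set H) : compact_operator T ->
  orthonormal_set inner A -> relatively_compact (T @` A).
Proof.
rewrite /compact_operator /relatively_compact -!precompactE => T_cpt A_on.
apply: precompact_subset T_cpt => _ [a Aa <-]; apply: imageP => /=.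
by rewrite (orthonormal_norm inner_prod A_on Aa).
Qed.

Lemma relatively_compact_orthonormal_basis (A : set H) :
  (forall B, orthonormal_basis inner B -> relatively_compact (T @` B)) ->
  orthonormal_set inner A -> relatively_compact (T @` A).
Proof.
move=> basis_cpt /(orthonormal_basis_ext inner_prod)[B AB /basis_cpt].
rewrite /relatively_compact -!precompactE; apply: precompact_subset.
exact: image_subset.
Qed.

Lemma norm_block_average_ge (v : nat -> H) (y : Y) (d : K) r :
  (forall n, `|T (v n) - y| <= d) ->
  (`|y| - d) *+ r.+1 <= `|T (block_average v r)|.
Proof.
move=> vy; rewrite linearZ linear_sum normrZ ger0_norm ?invr_ge0 //.
rewrite mulrC ler_pdivlMr ?ltr0Sn // mulr_natr -mulrnA mulnn -size_block.
exact: norm_sum_ge.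
Qed.

Hypothesis archi : Num.archimedean_axiom K.

Lemma orthonormal_unbounded_image (v : nat -> H) (y : Y) (d : K) :
  orthonormal_seq inner v -> (forall n, `|T (v n) - y| <= d) -> d < `|y| ->
  exists2 w, orthonormal_seq inner w & ~ exists M, forall r, `|T (w r)| <= M.
Proof.
move=> v_on vy dy; exists (block_average v).
  exact: (orthonormal_block_average inner_prod v_on).
move=> [M wM]; have M0 : 0 <= M := le_trans (normr_ge0 _) (wM 0%N).
have yd : 0 < `|y| - d by rewrite subr_gt0.
have My0 : 0 <= M / (`|y| - d) by rewrite divr_ge0 // ltW.
have [n] := archi (M / (`|y| - d)); rewrite ger0_norm // => Mn.
have := le_trans (norm_block_average_ge n vy) (wM n).
rewrite -mulr_natr -ler_pdivlMl // mulrC; apply/negP.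
by rewrite -real_ltNge ?realn ?ger0_real // (lt_trans Mn) // ltr_nat.
Qed.

Lemma orthonormal_image_bounded (w : nat -> H) :
  (forall A, orthonormal_set inner A -> relatively_compact (T @` A)) ->
  orthonormal_seq inner w -> exists M, forall r, `|T (w r)| <= M.
Proof.
move=> rc /orthonormal_set_range/rc; rewrite /relatively_compact -precompactE.
move=> /precompact_totally_bounded/totally_bounded_bounded[M wM].
by exists M => r; apply: wM; exists (w r) => //; exists r.
Qed.

Lemma orthonormal_image_cvg0 (u : nat -> H) :
  (forall A, orthonormal_set inner A -> relatively_compact (T @` A)) ->
  orthonormal_seq inner u -> (fun n => `|T (u n)|) @ \oo --> (0 : K).
Proof.
move=> rc u_on; apply/cvgr0Pnorm_lt => eps eps0.
apply: contrapT => /(contra_not (@near_infty_cofinite _)) far.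
pose N := [set n | eps <= `|T (u n)|].
have Ninf : infinite_set N.
  apply: sub_infinite_set far => n /= /negP.
  by rewrite normr_id -real_leNgt ?normr_real ?gtr0_real.
have d0 : 0 < eps / 2 by rewrite divr_gt0.
have tbN : totally_bounded ((T \o u) @` N).
  have := rc _ (orthonormal_set_range u_on).
  rewrite /relatively_compact -precompactE => /precompact_totally_bounded.
  by apply: totally_bounded_subset => _ [n _ <-]; exists (u n) => //; exists n.
have [z /infinite_set_injection[m m_inj mN]] :=
  totally_bounded_infinite_cluster d0 tbN Ninf.
have v_on := orthonormal_seq_comp u_on m_inj.
have vz n : `|T ((u \o m) n) - z| <= eps / 2 by apply/ltW; case: (mN n).
have dz : eps / 2 < `|z|.
  have [/= eps_le vz0] := mN 0%N; rewrite -(ltrD2l (eps / 2)) -splitr.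
  apply: le_lt_trans eps_le _; rewrite -[T _](subrK z).
  by rewrite (le_lt_trans (ler_normD _ _)) // ltrD2r.
have [w w_on w_unbounded] := orthonormal_unbounded_image v_on vz dz.
exact/w_unbounded/orthonormal_image_bounded.
Qed.

Lemma finite_orthonormal_large (A : set H) (eps : K) :
  (forall u, orthonormal_seq inner u -> (fun n => `|T (u n)|) @ \oo --> (0 : K)) ->
  orthonormal_set inner A -> 0 < eps ->
  finite_set [set a | A a /\ eps <= `|T a|].
Proof.
move=> cvg0 A_on eps0; apply: contrapT => /infinite_set_injection[u u_inj Au].
have u_on := orthonormal_seq_inj A_on (fun n => (Au n).1) u_inj.
have [N _ /(_ N (leqnn N))] := (cvgr0Pnorm_lt _).1 (cvg0 u u_on) eps eps0.
by rewrite normr_id real_ltNge ?normr_real ?gtr0_real // (Au N).2.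
Qed.

Lemma small_on_orthocomplement (eps : K) :
  (forall u, orthonormal_seq inner u -> (fun n => `|T (u n)|) @ \oo --> (0 : K)) ->
  0 < eps -> exists s : seq H, [/\ uniq s, orthonormal_set inner [set` s] &
    forall x, (forall b, b \in s -> inner x b = 0) -> `|T x| <= eps * `|x|].
Proof.
move=> cvg0 eps0.
have [|B [_ BQ B_on Bmax]] := maximal_orthonormal_set inner_prod
  (Q := [set x | eps < `|T x|]) (sub0set _); first by move=> ? ? [].
have : finite_set B.
  apply: sub_finite_set (finite_orthonormal_large cvg0 B_on eps0).
  by move=> b Bb; split=> //; apply/ltW/BQ.
move=> /finite_seqP[s0 B_s0]; exists (undup s0).
have B_s : B = [set` undup s0].
  by rewrite B_s0; apply/seteqP; split=> x /=; rewrite mem_undup.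
split; [exact: undup_uniq|by rewrite -B_s|move=> x xs].
have [->|x0] := eqVneq x 0; first by rewrite linear0 !normr0 mulr0.
pose e := `|x|^-1 *: x; have e1 : `|e| = 1 by exact: normfZV.
have eB b : B b -> inner e b = 0.
  by rewrite B_s => /xs xb; rewrite (innerZl inner_prod) xb mulr0.
have Te : `|T e| = `|T x| / `|x|.
  by rewrite linearZ normrZ normfV normr_id mulrC.
rewrite -ler_pdivrMr ?normr_gt0 // -Te real_leNgt ?normr_real ?gtr0_real //.
apply/negP => /Bmax /(_ e1 eB) /eB.
by rewrite (inner_self inner_prod) e1 expr1n => /eqP; rewrite oner_eq0.
Qed.

End OrthonormalImages.

Section CompleteCodomain.
Variables (K : numFieldType) (conj : K -> K) (H : normedModType K)
  (inner : H -> H -> K) (Y : completeNormedModType K) (T : {linear H -> Y}).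
Hypothesis inner_prod : is_inner_product conj inner.

Lemma relatively_compact_finite_large (A : set H) :
  (forall eps : K, 0 < eps -> finite_set [set a | A a /\ eps <= `|T a|]) ->
  relatively_compact (T @` A).
Proof.
move=> fin; rewrite /relatively_compact -precompactE.
apply/totally_bounded_precompact/totally_bounded_finite_large => e e0.
apply: sub_finite_set (finite_image T (fin e e0)).
by move=> _ [[a Aa <-] ea]; exists a.
Qed.

Hypothesis unit_ball_tb : totally_bounded [set c : K | `|c| <= 1].

Lemma compact_operator_small_orthocomplement :
  (forall eps : K, 0 < eps -> exists s : seq H,
    [/\ uniq s, orthonormal_set inner [set` s] &
    forall x, (forall b, b \in s -> inner x b = 0) -> `|T x| <= eps * `|x|]) ->
  compact_operator T.
Proof.
move=> small; rewrite /compact_operator /relatively_compact -precompactE.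
apply/totally_bounded_precompact/totally_bounded_approx => e e0.
have e2 : 0 < e / 2 by rewrite divr_gt0.
have [s [s_uniq s_on sT]] := small _ e2.
exists (bounded_combinations s T); first exact: totally_bounded_combinations.
move=> _ [x x1 <-]; exists (T (orth_proj inner s x)).
  have -> : T (orth_proj inner s x) = \sum_(b <- s) inner x b *: T b.
    by rewrite linear_sum; apply: eq_bigr => b _; rewrite linearZ.
  apply: (@imageP _ _ (fun c => \sum_(b <- s) c b *: T b)) => b sb /=.
  apply: le_trans (norm_inner_le_unit inner_prod _ _) x1.
  exact: (orthonormal_norm inner_prod s_on).
have perp := inner_sub_orth_proj inner_prod s_uniq s_on x.
have x_Px : `|x - orth_proj inner s x| <= 1.
  exact: le_trans (norm_sub_orth_proj_le inner_prod s_uniq s_on x) x1.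
rewrite -linearB (le_lt_trans (sT _ perp)) //.
rewrite (le_lt_trans (ler_wpM2l (ltW e2) x_Px)) //.
by rewrite mulr1 ltr_pdivrMr // ltr_pMr // ltr1n.
Qed.

End CompleteCodomain.

Lemma normC_Re_le (C : numClosedFieldType) (z : C) : `|'Re z| <= `|z|.
Proof. exact: (leif_normC_Re_Creal z).1. Qed.

Lemma normC_Im_le (C : numClosedFieldType) (z : C) : `|'Im z| <= `|z|.
Proof.
rewrite -(ler_pXn2r (n := 2)) ?nnegrE // [X in _ <= X]normC2_Re_Im.
by rewrite -(real_normK (Creal_Re z)) -(real_normK (Creal_Im z)) lerDr exprn_ge0.
Qed.

Lemma totally_bounded_unit_disc (C : numClosedFieldType) :
  totally_bounded [set x : C | x \is Num.real /\ `|x| <= 1] ->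
  totally_bounded [set z : C | `|z| <= 1].
Proof.
move=> tbR e e0; have [s sR] := tbR _ (divr_gt0 e0 (ltr0Sn C 1)).
exists [seq a + 'i * b | a <- s, b <- s] => z z1.
have [a sa za] := sR ('Re z) (conj (Creal_Re z) (le_trans (normC_Re_le z) z1)).
have [b sb zb] := sR ('Im z) (conj (Creal_Im z) (le_trans (normC_Im_le z) z1)).
exists (a + 'i * b); first exact: allpairs_f.
rewrite {1}[z]Crect opprD addrACA -mulrBr (le_lt_trans (ler_normD _ _)) //.
by rewrite normrM normCi mul1r [e]splitr ltrD.
Qed.

Lemma compact_operator_tfae (K : numFieldType) (conj : K -> K) :
  Num.archimedean_axiom K -> totally_bounded [set c : K | `|c| <= 1] ->
  theorem6_stmt conj.
Proof.
move=> archi unit_ball_tb H inner Y T inner_prod; tfae.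
- move=> T_cpt A; exact: (compact_operator_orthonormal inner_prod).
- move=> rc u; exact: (orthonormal_image_cvg0 inner_prod archi).
- move=> cvg0 A [A_on _] eps; exact: (finite_orthonormal_large cvg0 A_on).
- move=> fin A A_basis; apply: relatively_compact_finite_large; exact: fin.
move=> basis_rc.
apply: (compact_operator_small_orthocomplement inner_prod unit_ball_tb) => eps.
apply: (small_on_orthocomplement inner_prod) => u.
apply: (orthonormal_image_cvg0 inner_prod archi) => A.
exact: (relatively_compact_orthonormal_basis inner_prod).
Qed.

Lemma real_archimedean (R : realType) : Num.archimedean_axiom R.
Proof. by move=> x; exists (Num.bound `|x|); apply: archi_boundP. Qed.

Lemma real_unit_ball_totally_bounded (R : realType) :
  totally_bounded [set c : R | `|c| <= 1].
Proof.
have := compact_totally_bounded (@segment_compact R (-1) 1).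
by apply: totally_bounded_subset => c /=; rewrite in_itv /= -ler_norml.
Qed.

Local Open Scope complex_scope.

Lemma normc_real (R : rcfType) (a : R) : `|a%:C| = `|a|%:C.
Proof. by rewrite normc_def /= expr0n addr0 sqrtr_sqr. Qed.

Lemma totally_bounded_real_unit_complex (R : realType) :
  totally_bounded [set x : (R[i] : numFieldType) | x \is Num.real /\ `|x| <= 1].
Proof.
move=> e e0; have eRe : e = (complex.Re e)%:C by rewrite RRe_real ?gtr0_real.
have Re0 : 0 < complex.Re e by rewrite -ltcR -eRe.
have [s sI] := compact_totally_bounded (@segment_compact R (-1) 1) Re0.
exists (map (real_complex R) s) => _ [/complex_realP[a ->] a1].
have [b sb ab] : exists2 b, b \in s & `|a - b| < complex.Re e.
  apply: sI; rewrite /= in_itv /= -ler_norml -(@lecR R) -normc_real.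
  exact: a1.
exists b%:C; first exact: map_f.
by rewrite -rmorphB normc_real eRe ltcR.
Qed.

Lemma complex_archimedean (R : realType) : Num.archimedean_axiom R[i].
Proof.
move=> z; set r := Num.sqrt (complex.Re z ^+ 2 + complex.Im z ^+ 2).
have [n rn] := real_archimedean r; exists n.
rewrite normc_def -(rmorph_nat (real_complex R)) ltcR.
exact: le_lt_trans (ler_norm _) rn.
Qed.

Theorem theorem6 (R : realType) :
  theorem6_stmt (fun x : R => x) /\ theorem6_stmt (fun z : R[i] => z^*).
Proof.
split; apply: compact_operator_tfae.
- exact: real_archimedean.
- exact: real_unit_ball_totally_bounded.
- exact: complex_archimedean.
- exact/totally_bounded_unit_disc/totally_bounded_real_unit_complex.
Qed.
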